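(* (1) A geodesic metric space is $(L,C)$-quasi-isometric to a countable simplicial tree for some $L\geqslant 1$, $C\geqslant 0$ if and only if it is $(1,C')$-quasi-isometric to a countable simplicial tree for some $C'\geqslant 0$. (2) A geodesic metric space is $(L,C)$-quasi-isometric to a locally finite simplicial tree for some $L\geqslant 1$, $C\geqslant 0$ if and only if it is $(1,C')$-quasi-isometric to a locally finite simplicial tree for some $C'\geqslant 0$.
   Context: An $(L,C)$-quasi-isometry $f:(X,d_X)\to(Y,d_Y)$ satisfies $\frac1L d_X(a,b)-C\leqslant d_Y(f(a),f(b))\leqslant Ld_X(a,b)+C$ for all $a,b$, and every point of $Y$ is within distance $C$ of $f(X)$. A simplicial tree is a 1-dimensional simplicial complex which is an $\mathbb{R}$-tree for the path metric in which each edge has length 1; it is countable if it has countably many vertices, and locally finite if every vertex has finitely many neighbours. *)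

From Stdlib Require Import Reals Lra List ClassicalEpsilon.
Import ListNotations.
Open Scope R_scope.

Definition is_metric {X : Type} (d : X -> X -> R) : Prop :=
  (forall x y, 0 <= d x y) /\
  (forall x y, d x y = 0 <-> x = y) /\
  (forall x y, d x y = d y x) /\
  (forall x y z, d x z <= d x y + d y z).

Definition geodesic {X : Type} (d : X -> X -> R) : Prop :=
  forall x y, exists g : R -> X,
    g 0 = x /\ g (d x y) = y /\
    forall s t, 0 <= s <= d x y -> 0 <= t <= d x y -> d (g s) (g t) = Rabs (s - t).

Definition is_QI {X Y : Type} (dX : X -> X -> R) (dY : Y -> Y -> R)
  (f : X -> Y) (L C : R) : Prop :=
  (forall a b, / L * dX a b - C <= dY (f a) (f b) /\
               dY (f a) (f b) <= L * dX a b + C) /\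
  (forall y, exists x, dY y (f x) <= C).

Section Graph.
Variable V : Type.
Variable adj : V -> V -> Prop.

Inductive walk : V -> V -> nat -> Prop :=
| walk0 v : walk v v 0
| walkS u v w n : adj u v -> walk v w n -> walk u w (S n).

Fixpoint chain (l : list V) : Prop :=
  match l with
  | x :: ((y :: _) as t) => adj x y /\ chain t
  | _ => True
  end.

Definition connected_graph : Prop := forall u v, exists n, walk u v n.

Definition acyclic : Prop :=
  forall (v : V) (l : list V),
    (3 <= length (v :: l))%nat -> NoDup (v :: l) -> chain ((v :: l) ++ [v]) -> False.

Definition simplicial_tree : Prop :=
  inhabited V /\
  (forall u v, adj u v -> adj v u) /\
  (forall v, ~ adj v v) /\
  connected_graph /\ acyclic.



Definition locally_finite_graph : Prop :=
  forall v, exists l : list V, forall w, adj v w -> In w l.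

Definition gdist (a b : V) : R :=
  INR (epsilon (inhabits 0%nat)
         (fun n => walk a b n /\ forall m, walk a b m -> (n <= m)%nat)).

(** A point is (a, b, t): either the vertex a (a = b, t = 0), or the point of the
    edge {a,b} at distance t from a. Different representations of the same
    point (e.g. (a,b,t) and (b,a,1-t)) are at distance 0. *)
Record TPoint := {
  tp_a : V; tp_b : V; tp_t : R;
  tp_ok : (tp_a = tp_b /\ tp_t = 0) \/ (adj tp_a tp_b /\ 0 <= tp_t <= 1) }.

Definition ends (p : TPoint) : list (V * R) :=
  [(tp_a p, tp_t p); (tp_b p, 1 - tp_t p)].

Definition Rmin_list (r0 : R) (l : list R) : R := fold_right Rmin r0 l.

(** Length of the shortest route leaving each point through one of the
    endpoints of its edge. *)
Definition via (p q : TPoint) : R :=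
  match
    flat_map (fun e => map (fun e' => snd e + gdist (fst e) (fst e') + snd e') (ends q))
      (ends p)
  with
  | [] => 0
  | r :: rs => Rmin_list r rs
  end.

Definition tree_dist (p q : TPoint) : R :=
  if excluded_middle_informative (tp_a p = tp_a q /\ tp_b p = tp_b q) then
    Rmin (Rabs (tp_t p - tp_t q)) (via p q)
  else if excluded_middle_informative (tp_a p = tp_b q /\ tp_b p = tp_a q) then
    Rmin (Rabs (tp_t p - (1 - tp_t q))) (via p q)
  else via p q.

End Graph.

Arguments tree_dist {V adj}.

Definition countable_graph (V : Type) (adj : V -> V -> Prop) : Prop :=
  exists g : V -> nat, forall u v, g u = g v -> u = v.

Definition QI_to_tree (P : forall V : Type, (V -> V -> Prop) -> Prop)
  {X : Type} (d : X -> X -> R) (L C : R) : Prop :=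
  exists (V : Type) (adj : V -> V -> Prop),
    simplicial_tree V adj /\ P V adj /\
    exists f : X -> TPoint V adj, is_QI d tree_dist f L C.

(* Let f be an (L,C)-quasi-isometry from X to a simplicial tree T, fix a base point x0 and
   write h = d(x0, .). Call two points of height >= k joined at level k if a chain of steps
   of length <= 1 connects them without going below height k - M, where M is of the order
   of L C. The classes of this relation, over all levels k, are the vertices of a new tree,
   in which a class at level k is adjacent to the class at level k - 1 containing it; x is
   sent to its class at level floor(h x). A geodesic between points that are not joined at
   level k dips below k - M, which bounds distances in the new tree by d + 2. Conversely,
   the image under f of a chain passes near every vertex of T separating the images of its
   ends; using a median of three image vertices, the geodesics from x0 to two points x, y
   joined at level k and a chain joining them have nearby points, which gives
   d(x, y) <= h x + h y - 2k + K for a constant K. Hence d is at most the new tree distance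
   plus K + 4. Finally, points of the same level with the same image under f are within L C
   of each other, hence joined, so the new tree is countable, resp. locally finite, whenever
   T is. *)

From Stdlib Require Import Reals Lra Lia List Permutation Wf_nat Cantor
  ClassicalEpsilon Classical ProofIrrelevance FunctionalExtensionality PropExtensionality.
Import ListNotations.
Open Scope R_scope.

Arguments tp_a {V adj}.
Arguments tp_b {V adj}.
Arguments tp_t {V adj}.

Lemma nat_least (P : nat -> Prop) :
  (exists n, P n) -> exists n, P n /\ forall m, P m -> (n <= m)%nat.
Proof.
  intros Hex.
  destruct (dec_inh_nat_subset_has_unique_least_element P (fun n => classic (P n)) Hex)
    as [n [[Hn Hmin] _]].
  eauto.
Qed.

Lemma nat_greatest_below (P : nat -> Prop) n :
  P 0%nat -> exists k, (k <= n)%nat /\ P k /\ (k = n \/ ~ P (S k)).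
Proof.
  intros H0. induction n as [|n IH]; [exists 0%nat; auto|].
  destruct (classic (P (S n))) as [HS|HS]; [exists (S n); auto|].
  destruct IH as (k & Hk & Pk & Hmax). exists k. split; [lia|split; [exact Pk|]].
  right. destruct Hmax as [->|Hnk]; assumption.
Qed.

Lemma nat_floor r : 0 <= r -> exists n, INR n <= r < INR n + 1.
Proof.
  intros Hr. destruct (nat_least (fun n => r < INR n + 1)) as (n & Hn & Hmin).
  { destruct (INR_unbounded r) as [n Hn]. exists n. lra. }
  exists n. split; [|exact Hn]. destruct n as [|n]; [simpl; lra|].
  destruct (Rlt_or_le r (INR n + 1)) as [Hlt|Hle]; [specialize (Hmin n Hlt); lia|].
  rewrite S_INR. exact Hle.
Qed.

Lemma list_argmax {T : Type} (g : T -> nat) (A : list T) a :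
  In a A -> exists m, In m A /\ forall v, In v A -> (g v <= g m)%nat.
Proof.
  revert a. induction A as [|x A IH]; intros a Ha; [destruct Ha|].
  destruct A as [|y A]; [exists x; split; [left|intros v [<-|[]]]; auto|].
  destruct (IH y (or_introl eq_refl)) as [m [Hm Hmax]].
  destruct (Nat.le_gt_cases (g m) (g x)).
  - exists x. split; [left; reflexivity|]. intros v [<-|Hv]; [lia|]. specialize (Hmax v Hv). lia.
  - exists m. split; [right; exact Hm|]. intros v [<-|Hv]; [lia|auto].
Qed.

Lemma NoDup_app_disjoint {T : Type} (l m : list T) x :
  NoDup (l ++ m) -> In x l -> ~ In x m.
Proof.
  induction l as [|y l IH]; simpl; intros H H1 H2; [exact H1|].
  inversion H as [|? ? Hy Hl]; subst. destruct H1 as [<-|H1].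
  - apply Hy, in_or_app. right; exact H2.
  - exact (IH Hl H1 H2).
Qed.

(** * Graphs and trees *)

Section Graphs.
Variables (V : Type) (adj : V -> V -> Prop).

Definition vertex_point (v : V) : TPoint V adj :=
  Build_TPoint V adj v v 0 (or_introl (conj eq_refl eq_refl)).

Inductive path : V -> list V -> V -> Prop :=
| path_nil a : path a [] a
| path_cons a b l c : adj a b -> path b l c -> path a (b :: l) c.

Lemma walk_path a b n : walk V adj a b n -> exists l, path a l b /\ length l = n.
Proof.
  induction 1 as [v|u v w n Huv _ [l [Hl <-]]]; [exists []; split; constructor|].
  exists (v :: l). split; [econstructor; eauto|reflexivity].
Qed.

Lemma path_walk a l b : path a l b -> walk V adj a b (length l).
Proof. induction 1; simpl; econstructor; eauto. Qed.

Lemma walk_app a b c n m : walk V adj a b n -> walk V adj b c m -> walk V adj a c (n + m).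
Proof. induction 1; simpl; intros; [assumption|econstructor; eauto]. Qed.

Lemma path_app a l b m c : path a l b -> path b m c -> path a (l ++ m) c.
Proof. induction 1; simpl; intros; [assumption|econstructor; eauto]. Qed.

Lemma path_app_inv a l m c : path a (l ++ m) c -> exists b, path a l b /\ path b m c.
Proof.
  revert a. induction l as [|x l IH]; simpl; intros a H; [exists a; split; [constructor|exact H]|].
  inversion H as [|? ? ? ? Hax Hrest]; subst. destruct (IH _ Hrest) as [b [H1 H2]].
  exists b. split; [econstructor; eauto|exact H2].
Qed.

Lemma path_split a l1 x l2 b :
  path a (l1 ++ x :: l2) b -> exists c, path a l1 c /\ adj c x /\ path x l2 b.
Proof.
  intros H. destruct (path_app_inv _ _ _ _ H) as [c [H1 H2]].
  inversion H2; subst. eauto.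
Qed.

Lemma path_last_in a l b : path a l b -> In b (a :: l).
Proof. induction 1; simpl in *; tauto. Qed.

Lemma path_in_app a l b m c x : path a l b -> path b m c ->
  In x (a :: l ++ m) -> In x (a :: l) \/ In x (b :: m).
Proof.
  intros H1 H2 Hx. change (In x ((a :: l) ++ m)) in Hx.
  apply in_app_or in Hx. destruct Hx; [left|right; right]; assumption.
Qed.

Lemma path_prefix a l b x : path a l b -> In x (a :: l) ->
  exists l1, path a l1 x /\ (length l1 <= length l)%nat.
Proof.
  intros H [<-|Hx]; [exists []; split; [constructor|simpl; lia]|].
  destruct (in_split _ _ Hx) as (l1 & l2 & ->).
  destruct (path_split _ _ _ _ _ H) as (c & H1 & Hcx & _).
  exists (l1 ++ [x]). split.
  - apply path_app with c; [exact H1|econstructor; [exact Hcx|constructor]].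
  - rewrite !length_app. simpl. lia.
Qed.

Lemma path_suffix a l b x : path a l b -> In x (a :: l) ->
  exists l1 l2, a :: l = l1 ++ x :: l2 /\ path x l2 b.
Proof.
  intros H [<-|Hx]; [exists [], l; split; [reflexivity|exact H]|].
  destruct (in_split _ _ Hx) as (l1 & l2 & ->).
  destruct (path_split _ _ _ _ _ H) as (c & _ & _ & H2).
  exists (a :: l1), l2. split; [reflexivity|exact H2].
Qed.

Lemma path_snoc_inv a l b : path a l b -> l <> [] ->
  exists l' w, path a l' w /\ adj w b /\ S (length l') = length l.
Proof.
  intros H Hne. destruct (exists_last Hne) as (l' & x & ->).
  destruct (path_split _ _ _ _ _ H) as (w & H1 & Hwx & H2).
  inversion H2; subst. exists l', w. rewrite length_app. simpl. split; [|split]; auto; lia.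
Qed.

Lemma path_undup a l b : path a l b ->
  exists l', path a l' b /\ NoDup (a :: l') /\ incl (a :: l') (a :: l).
Proof.
  induction 1 as [a|a c l b Hac Hp (l' & H1 & H2 & H3)].
  - exists []. split; [constructor|]. split; [repeat constructor; simpl; tauto|apply incl_refl].
  - destruct (classic (In a (c :: l'))) as [Hin|Hnin].
    + destruct (path_suffix _ _ _ _ H1 Hin) as (l1 & l2 & E & H4).
      exists l2. split; [exact H4|]. rewrite E in H2, H3. split.
      * exact (NoDup_app_remove_l _ _ H2).
      * intros z Hz. right. apply H3, in_or_app. right. exact Hz.
    + exists (c :: l'). split; [econstructor; eauto|]. split; [constructor; assumption|].
      intros z [<-|Hz]; [left; reflexivity|right; apply H3; exact Hz].
Qed.

Lemma path_chain a l b m : path a l b -> adj b m -> chain V adj ((a :: l) ++ [m]).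
Proof.
  induction 1 as [a|a c l b Hac _ IH]; intros Hbm; simpl; [auto|].
  split; [exact Hac|apply IH; exact Hbm].
Qed.

Lemma locally_finite_ball : locally_finite_graph V adj ->
  forall c n, exists B, forall l w, path c l w -> (length l <= n)%nat -> In w B.
Proof.
  intros Hlf c.
  set (nb v := proj1_sig (constructive_indefinite_description _ (Hlf v))).
  assert (Hnb : forall v w, adj v w -> In w (nb v))
    by (intros v; exact (proj2_sig (constructive_indefinite_description _ (Hlf v)))).
  induction n as [|n [B IH]].
  - exists [c]. intros [|x l] w Hp Hl; [inversion Hp; left; reflexivity|simpl in Hl; lia].
  - exists (B ++ flat_map nb B). intros l w Hp Hl.
    destruct (Nat.le_gt_cases (length l) n) as [Hn|Hn]; apply in_or_app; [left; eauto|right].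
    destruct (path_snoc_inv _ _ _ Hp) as (l' & v & Hp' & Hvw & El); [intros ->; simpl in Hn; lia|].
    apply in_flat_map. exists v. split; [apply (IH l'); [exact Hp'|lia]|apply Hnb; exact Hvw].
Qed.

Hypothesis adj_sym : forall u v, adj u v -> adj v u.

Lemma path_rev a l b : path a l b -> exists l', path b l' a /\ Permutation (a :: l) (b :: l').
Proof.
  induction 1 as [a|a c l b Hac _ IH]; [exists []; split; repeat constructor|].
  destruct IH as (l' & Hp & Hperm). exists (l' ++ [a]). split.
  - apply path_app with c; [exact Hp|econstructor; [apply adj_sym; exact Hac|constructor]].
  - rewrite app_comm_cons. eapply Permutation_trans; [apply Permutation_cons_append|].
    apply Permutation_app_tail. exact Hperm.
Qed.

Lemma walk_rev a b n : walk V adj a b n -> walk V adj b a n.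
Proof.
  intros H. destruct (walk_path _ _ _ H) as (l & Hl & <-).
  destruct (path_rev _ _ _ Hl) as (l' & Hl' & Hperm).
  apply Permutation_length in Hperm. injection Hperm as ->. apply path_walk, Hl'.
Qed.

Hypothesis conn : connected_graph V adj.

Definition gdistn (a b : V) : nat :=
  epsilon (inhabits 0%nat)
    (fun n => walk V adj a b n /\ forall m, walk V adj a b m -> (n <= m)%nat).

Lemma gdistE a b : gdist V adj a b = INR (gdistn a b).
Proof. reflexivity. Qed.

Lemma gdistn_spec a b :
  walk V adj a b (gdistn a b) /\ forall m, walk V adj a b m -> (gdistn a b <= m)%nat.
Proof. unfold gdistn. apply epsilon_spec, nat_least, conn. Qed.

Lemma gdistn_path a b : exists l, path a l b /\ length l = gdistn a b.
Proof. apply walk_path, gdistn_spec. Qed.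

Lemma gdistn_le_walk a b n : walk V adj a b n -> (gdistn a b <= n)%nat.
Proof. apply gdistn_spec. Qed.

Lemma gdistn_le_path a l b : path a l b -> (gdistn a b <= length l)%nat.
Proof. intros H. apply gdistn_le_walk, path_walk, H. Qed.

Lemma gdistn_triangle a b c : (gdistn a c <= gdistn a b + gdistn b c)%nat.
Proof.
  destruct (gdistn_path a b) as [l1 [H1 <-]]. destruct (gdistn_path b c) as [l2 [H2 <-]].
  rewrite <- length_app. apply gdistn_le_path, path_app with b; assumption.
Qed.

Lemma gdistn_sym a b : gdistn a b = gdistn b a.
Proof.
  enough (H : forall a b, (gdistn a b <= gdistn b a)%nat)
    by (pose proof (H a b); pose proof (H b a); lia).
  intros x y. apply gdistn_spec, walk_rev, gdistn_spec.
Qed.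

Lemma gdistn_refl a : gdistn a a = 0%nat.
Proof. pose proof (gdistn_le_path _ _ _ (path_nil a)). simpl in H. lia. Qed.

Lemma gdistn_adj a b : adj a b -> (gdistn a b <= 1)%nat.
Proof. intros H. apply (gdistn_le_path a [b] b). repeat econstructor. exact H. Qed.

Lemma gdistn_triangle_R a b c : INR (gdistn a c) <= INR (gdistn a b) + INR (gdistn b c).
Proof. rewrite <- plus_INR. apply le_INR, gdistn_triangle. Qed.

Lemma tpoint_bounds (p : TPoint V adj) : (gdistn (tp_a p) (tp_b p) <= 1)%nat /\ 0 <= tp_t p <= 1.
Proof.
  destruct p as [a b t [[-> ->]|[Hab Ht]]]; simpl.
  - rewrite gdistn_refl. split; [lia|lra].
  - split; [apply gdistn_adj|]; assumption.
Qed.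

Lemma gdistn_perturb a a' e e' : (gdistn a e <= 1)%nat -> (gdistn a' e' <= 1)%nat ->
  INR (gdistn a a') <= INR (gdistn e e') + 2.
Proof.
  intros He He'. replace 2 with (INR 2) by (simpl; lra). rewrite <- plus_INR. apply le_INR.
  pose proof (gdistn_triangle a e a'). pose proof (gdistn_triangle e e' a').
  rewrite (gdistn_sym e' a') in H0. lia.
Qed.

Lemma via_near (p q : TPoint V adj) :
  INR (gdistn (tp_a p) (tp_a q)) - 2 <= via V adj p q <= INR (gdistn (tp_a p) (tp_a q)) + 2.
Proof.
  pose proof (tpoint_bounds p) as [Hp Ht]. pose proof (tpoint_bounds q) as [Hq Ht'].
  destruct p as [a b t okp], q as [a' b' t' okq]; simpl in *.
  unfold via, ends, Rmin_list; simpl; rewrite !gdistE.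
  assert (Hrefl : forall v, (gdistn v v <= 1)%nat) by (intros; rewrite gdistn_refl; lia).
  pose proof (gdistn_perturb a a' a a' (Hrefl a) (Hrefl a')).
  pose proof (gdistn_perturb a a' a b' (Hrefl a) Hq).
  pose proof (gdistn_perturb a a' b a' Hp (Hrefl a')).
  pose proof (gdistn_perturb a a' b b' Hp Hq).
  split.
  - repeat apply Rmin_glb; lra.
  - eapply Rle_trans; [apply Rmin_r|]. eapply Rle_trans; [apply Rmin_r|].
    eapply Rle_trans; [apply Rmin_r|]. lra.
Qed.

Lemma tree_dist_near (p q : TPoint V adj) :
  INR (gdistn (tp_a p) (tp_a q)) - 2 <= tree_dist p q <= INR (gdistn (tp_a p) (tp_a q)) + 2.
Proof.
  pose proof (via_near p q) as Hvia.
  set (D := INR (gdistn (tp_a p) (tp_a q))) in *.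
  assert (Hmin : forall r, D - 2 <= r -> D - 2 <= Rmin r (via V adj p q) <= D + 2).
  { intros r Hr. split; [apply Rmin_glb; lra|]. apply Rle_trans with (2 := proj2 Hvia), Rmin_r. }
  unfold tree_dist.
  destruct (excluded_middle_informative _) as [[Ea _]|_];
    [|destruct (excluded_middle_informative _) as [[Ea _]|_]]; [apply Hmin..|exact Hvia].
  - unfold D. rewrite Ea, gdistn_refl. pose proof (Rabs_pos (tp_t p - tp_t q)). simpl. lra.
  - pose proof (tpoint_bounds q) as [Hq _]. apply le_INR in Hq.
    unfold D. rewrite Ea, gdistn_sym. pose proof (Rabs_pos (tp_t p - (1 - tp_t q))). simpl in Hq. lra.
Qed.

Hypothesis acyc : acyclic V adj.

Lemma acyclic_no_bypass m u w l : adj m u -> adj m w -> u <> w ->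
  path u l w -> ~ In m (u :: l) -> False.
Proof.
  intros Hu Hw Hne Hp Hm.
  destruct (path_undup _ _ _ Hp) as (l' & H1 & H2 & H3).
  apply (acyc m (u :: l')).
  - destruct l' as [|y l']; [inversion H1; congruence|simpl; lia].
  - constructor; [intros Hin; apply Hm, H3, Hin|exact H2].
  - split; [exact Hu|]. exact (path_chain _ _ _ _ H1 (adj_sym _ _ Hw)).
Qed.

Definition separates (a b m : V) : Prop := forall l, path a l b -> In m (a :: l).

Lemma simple_path_separates a P b m : path a P b -> NoDup (a :: P) ->
  In m (a :: P) -> separates a b m.
Proof.
  intros Hp Hnd [<-|Hm] W HW; [left; reflexivity|].
  destruct (classic (In m (a :: W))) as [|HnW]; [assumption|exfalso].
  destruct (in_split _ _ Hm) as (l1 & l2 & ->).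
  destruct (path_split _ _ _ _ _ Hp) as (c & H1 & Hcm & H2).
  destruct l2 as [|b1 l2]; [inversion H2; subst; exact (HnW (path_last_in _ _ _ HW))|].
  inversion H2 as [|? ? ? ? Hmb1 H3]; subst.
  rewrite app_comm_cons in Hnd.
  destruct (path_rev _ _ _ H1) as (R1 & HR1 & P1).
  destruct (path_rev _ _ _ H3) as (R2 & HR2 & P2).
  assert (Hc : In c (a :: l1)) by exact (path_last_in _ _ _ H1).
  apply (acyclic_no_bypass m c b1 (R1 ++ W ++ R2)).
  - apply adj_sym, Hcm.
  - exact Hmb1.
  - intros ->. apply (NoDup_app_disjoint _ _ _ Hnd Hc). right; left; reflexivity.
  - apply path_app with a; [exact HR1|apply path_app with b; assumption].
  - intros Hin.
    destruct (path_in_app _ _ _ _ _ _ HR1 (path_app _ _ _ _ _ HW HR2) Hin) as [Hin'|Hin'];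
      [|destruct (path_in_app _ _ _ _ _ _ HW HR2 Hin') as [Hin''|Hin'']].
    + apply (NoDup_app_disjoint _ _ _ Hnd (Permutation_in _ (Permutation_sym P1) Hin')).
      left; reflexivity.
    + exact (HnW Hin'').
    + apply Permutation_in with (l' := b1 :: l2) in Hin''; [|apply Permutation_sym, P2].
      apply NoDup_app_remove_l in Hnd. inversion Hnd; subst. contradiction.
Qed.

Lemma closest_point_separates o a P b m : path a P b -> NoDup (a :: P) -> In m (a :: P) ->
  (forall v, In v (a :: P) -> (gdistn o m <= gdistn o v)%nat) -> separates o a m.
Proof.
  intros Hp Hnd Hm Hclosest W HW.
  destruct Hm as [<-|Hm]; [exact (path_last_in _ _ _ HW)|].
  destruct (classic (m = o)) as [->|Hmo]; [left; reflexivity|].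
  destruct (classic (In m (o :: W))) as [|HnW]; [assumption|exfalso].
  destruct (in_split _ _ Hm) as (l1 & l2 & ->).
  destruct (path_split _ _ _ _ _ Hp) as (c & H1 & Hcm & _).
  rewrite app_comm_cons in Hnd.
  destruct (gdistn_path o m) as (Q & HQ & EQ).
  destruct (path_snoc_inv _ _ _ HQ) as (Q' & w & HQ' & Hwm & EQ');
    [intros ->; inversion HQ; congruence|].
  assert (HmQ : ~ In m (o :: Q')).
  { intros Hin. destruct (path_prefix _ _ _ _ HQ' Hin) as (l3 & Hl3 & Hlen).
    pose proof (gdistn_le_path _ _ _ Hl3). lia. }
  destruct (path_rev _ _ _ HQ') as (R & HR & PR).
  destruct (classic (w = c)) as [->|Hwc].
  - assert (Hc : In c (a :: l1 ++ m :: l2))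
      by (rewrite app_comm_cons; apply in_or_app; left; exact (path_last_in _ _ _ H1)).
    specialize (Hclosest c Hc). pose proof (gdistn_le_path _ _ _ HQ'). lia.
  - apply (acyclic_no_bypass m w c (R ++ W ++ l1)).
    + apply adj_sym, Hwm.
    + apply adj_sym, Hcm.
    + exact Hwc.
    + apply path_app with o; [exact HR|apply path_app with a; assumption].
    + intros Hin.
      destruct (path_in_app _ _ _ _ _ _ HR (path_app _ _ _ _ _ HW H1) Hin) as [Hin'|Hin'];
        [|destruct (path_in_app _ _ _ _ _ _ HW H1 Hin') as [Hin''|Hin'']].
      * exact (HmQ (Permutation_in _ (Permutation_sym PR) Hin')).
      * exact (HnW Hin'').
      * apply (NoDup_app_disjoint _ _ _ Hnd Hin''). left; reflexivity.
Qed.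

Lemma median o a b : exists m, separates a b m /\ separates o a m /\ separates o b m.
Proof.
  destruct (gdistn_path a b) as (P0 & HP0 & _).
  destruct (path_undup _ _ _ HP0) as (P & Hp & Hnd & _).
  destruct (nat_least (fun n => exists v, In v (a :: P) /\ gdistn o v = n))
    as (n & (m & Hm & <-) & Hmin); [exists (gdistn o a); exists a; split; [left|]; reflexivity|].
  assert (Hclosest : forall v, In v (a :: P) -> (gdistn o m <= gdistn o v)%nat) by eauto.
  destruct (path_rev _ _ _ Hp) as (P' & Hp' & Hperm).
  exists m. split; [|split].
  - exact (simple_path_separates _ _ _ _ Hp Hnd Hm).
  - exact (closest_point_separates _ _ _ _ _ Hp Hnd Hm Hclosest).
  - apply (closest_point_separates _ _ _ _ _ Hp' (Permutation_NoDup Hperm Hnd)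
      (Permutation_in _ Hperm Hm)).
    intros v Hv. apply Hclosest, (Permutation_in _ (Permutation_sym Hperm) Hv).
Qed.

End Graphs.

Section ParentGraph.
Variables (T : Type) (lvl : T -> nat) (par : T -> T).

Definition parent_adj (u v : T) : Prop :=
  (lvl v = S (lvl u) /\ par v = u) \/ (lvl u = S (lvl v) /\ par u = v).

Lemma parent_adj_sym u v : parent_adj u v -> parent_adj v u.
Proof. unfold parent_adj. tauto. Qed.

Lemma parent_adj_irrefl u : ~ parent_adj u u.
Proof. intros [[H _]|[H _]]; lia. Qed.

Lemma chain_app l x m : chain T parent_adj (l ++ x :: m) <->
  chain T parent_adj (l ++ [x]) /\ chain T parent_adj (x :: m).
Proof.
  induction l as [|a [|b l] IH]; simpl in *; [destruct m; simpl; tauto..|].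
  rewrite IH. tauto.
Qed.

Lemma cycle_rotate v l w : In w (v :: l) -> chain T parent_adj ((v :: l) ++ [v]) ->
  exists l', Permutation (v :: l) (w :: l') /\ chain T parent_adj ((w :: l') ++ [w]).
Proof.
  intros Hin Hc. destruct (in_split _ _ Hin) as ([|v' l1] & l2 & E); simpl in E;
    injection E as <- ->; [exists l2; auto|].
  exists (l2 ++ v :: l1). split.
  - change (Permutation ((v :: l1) ++ w :: l2) ((w :: l2) ++ v :: l1)). apply Permutation_app_comm.
  - replace ((v :: l1 ++ w :: l2) ++ [v]) with ((v :: l1) ++ w :: (l2 ++ [v])) in Hc
      by (simpl; rewrite <- app_assoc; reflexivity).
    replace ((w :: l2 ++ v :: l1) ++ [w]) with ((w :: l2) ++ v :: (l1 ++ [w]))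
      by (simpl; rewrite <- app_assoc; reflexivity).
    apply chain_app in Hc as [H1 H2]. apply chain_app. split; assumption.
Qed.

(* Both cycle-neighbours of a vertex of maximal level would have to be its parent. *)
Lemma parent_adj_acyclic : acyclic T parent_adj.
Proof.
  intros v l Hlen Hnd Hc.
  destruct (list_argmax lvl (v :: l) v (or_introl eq_refl)) as (w & Hw & Hmax).
  destruct (cycle_rotate v l w Hw Hc) as (l' & Hperm & Hc').
  pose proof (Permutation_length Hperm) as Elen.
  pose proof (Permutation_NoDup Hperm Hnd) as Hnd'.
  destruct l' as [|b1 l']; [simpl in *; lia|].
  destruct l' as [|b2 l'] using rev_ind; [simpl in *; lia|]. clear IHl'.
  assert (Hin : forall x, In x (w :: b1 :: l' ++ [b2]) -> In x (v :: l))
    by (intros x Hx; exact (Permutation_in _ (Permutation_sym Hperm) Hx)).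
  replace ((w :: b1 :: l' ++ [b2]) ++ [w]) with ((w :: b1 :: l') ++ b2 :: [w]) in Hc'
    by (simpl; rewrite <- app_assoc; reflexivity).
  apply chain_app in Hc' as [[Hwb1 _] [Hb2w _]].
  assert (Hparent : forall b, parent_adj w b -> (lvl b <= lvl w)%nat -> b = par w)
    by (intros b [[? ?]|[? ?]] ?; [lia|auto]).
  rewrite (Hparent b1 Hwb1), <- (Hparent b2 (parent_adj_sym _ _ Hb2w)) in Hnd'.
  - apply NoDup_cons_iff in Hnd' as [_ Hnd']. apply NoDup_cons_iff in Hnd' as [Hb _].
    apply Hb, in_or_app. right; left; reflexivity.
  - apply Hmax, Hin. right; right. apply in_or_app. right; left; reflexivity.
  - apply Hmax, Hin. right; left; reflexivity.
Qed.

End ParentGraph.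

(** * Chains in a geodesic space *)

Section GeodesicSpace.
Variables (X : Type) (d : X -> X -> R).
Hypothesis metric : is_metric d.
Hypothesis geod : geodesic d.

Lemma dist_ge0 x y : 0 <= d x y. Proof. apply metric. Qed.
Lemma dist_sym x y : d x y = d y x. Proof. apply metric. Qed.
Lemma dist_triangle x y z : d x z <= d x y + d y z. Proof. apply metric. Qed.

Inductive chained (P : X -> Prop) : X -> X -> Prop :=
| chained_refl x : P x -> chained P x x
| chained_step x y z : P x -> d x y <= 1 -> chained P y z -> chained P x z.

Lemma chained_in_l P x y : chained P x y -> P x.
Proof. destruct 1; assumption. Qed.

Lemma chained_trans P x y z : chained P x y -> chained P y z -> chained P x z.
Proof. induction 1; intros; [assumption|econstructor; eauto]. Qed.

Lemma chained_sym P x y : chained P x y -> chained P y x.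
Proof.
  induction 1 as [x Hx|x y z Hx Hxy Hyz IH]; [constructor; exact Hx|].
  apply chained_trans with y; [exact IH|].
  apply chained_step with x; [exact (chained_in_l _ _ _ Hyz)|rewrite dist_sym; exact Hxy|].
  constructor. exact Hx.
Qed.

Lemma chained_weaken (P Q : X -> Prop) x y :
  (forall z, P z -> Q z) -> chained P x y -> chained Q x y.
Proof. intros H. induction 1; econstructor; eauto. Qed.

Lemma geodesic_chained (g : R -> X) (D : R)
  (Hiso : forall s t, 0 <= s <= D -> 0 <= t <= D -> d (g s) (g t) = Rabs (s - t))
  (P : X -> Prop) s t : 0 <= s <= t -> t <= D ->
  (forall u, s <= u <= t -> P (g u)) -> chained P (g s) (g t).
Proof.
  intros Hs Ht HP. destruct (INR_unbounded (t - s)) as [N HN].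
  revert s Hs HP HN. induction N as [|N IH]; intros s Hs HP HN; [simpl in HN; lra|].
  destruct (Rle_dec (t - s) 1) as [H1|H1].
  - apply chained_step with (g t); [apply HP; lra| |constructor; apply HP; lra].
    rewrite Hiso by lra. rewrite Rabs_left1; lra.
  - apply chained_step with (g (s + 1)); [apply HP; lra| |].
    + rewrite Hiso by lra. rewrite Rabs_left1; lra.
    + apply IH; [lra|intros u Hu; apply HP; lra|]. rewrite S_INR in HN. lra.
Qed.

Lemma chained_or_escapes (P : X -> Prop) x y :
  chained P x y \/ exists z, d x z + d z y = d x y /\ ~ P z.
Proof.
  destruct (geod x y) as (g & G0 & G1 & Giso).
  destruct (classic (forall u, 0 <= u <= d x y -> P (g u))) as [HP|HP].
  - left. rewrite <- G0, <- G1. pose proof (dist_ge0 x y).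
    apply (geodesic_chained g (d x y) Giso); [lra|lra|intros u Hu; apply HP; lra].
  - right. apply not_all_ex_not in HP as [u Hu]. apply imply_to_and in Hu as [Hu HPu].
    exists (g u). split; [|exact HPu].
    rewrite <- G0 at 1. rewrite <- G1 at 1. rewrite !Giso by lra.
    rewrite Rabs_left1, Rabs_left1; lra.
Qed.

(** * The level tree *)

Section LevelTree.
Variables (x0 : X) (M : R).
Hypothesis M_ge0 : 0 <= M.

Definition height (z : X) : R := d x0 z.

Lemma height_lipschitz x y : height y <= height x + d x y.
Proof. apply dist_triangle. Qed.

Lemma geodesic_cut x r : 0 <= r <= height x -> exists x',
  height x' = r /\ d x' x = height x - r /\
  chained (fun z => r <= height z) x' x /\ chained (fun z => height z + d z x' = r) x0 x'.
Proof.
  intros Hr. destruct (geod x0 x) as (g & G0 & G1 & Giso). fold (height x) in G1, Giso.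
  assert (Hg : forall u, 0 <= u <= height x -> height (g u) = u).
  { intros u Hu. unfold height. rewrite <- G0 at 1. rewrite Giso by lra. rewrite Rabs_left1; lra. }
  exists (g r). split; [apply Hg; lra|]. split.
  - rewrite <- G1 at 1. rewrite Giso by lra. rewrite Rabs_left1; lra.
  - split; [rewrite <- G1 at 1|rewrite <- G0 at 1];
      apply (geodesic_chained g (height x) Giso); try lra; intros u Hu.
    + rewrite Hg; lra.
    + rewrite Hg, Giso by lra. rewrite Rabs_left1; lra.
Qed.

Definition joined (k : nat) : X -> X -> Prop := chained (fun z => INR k - M <= height z).

Lemma joined_refl k x : INR k <= height x -> joined k x x.
Proof. intros H. constructor. lra. Qed.

Lemma joined_sym k x y : joined k x y -> joined k y x.
Proof. apply chained_sym. Qed.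

Lemma joined_trans k x y z : joined k x y -> joined k y z -> joined k x z.
Proof. apply chained_trans. Qed.

Lemma joined_mono k k' x y : (k' <= k)%nat -> joined k x y -> joined k' x y.
Proof. intros Hk. apply chained_weaken. intros z Hz. apply le_INR in Hk. lra. Qed.

Lemma joined_ext k x y : joined k x y -> joined k x = joined k y.
Proof.
  intros H. apply functional_extensionality. intros z. apply propositional_extensionality.
  split; intros H';
    [apply joined_trans with x; [apply joined_sym|]|apply joined_trans with y]; assumption.
Qed.

Lemma joined_zero x y : joined 0 x y.
Proof.
  destruct (chained_or_escapes (fun z => INR 0 - M <= height z) x y) as [|(z & _ & Hz)];
    [assumption|].
  exfalso. apply Hz. pose proof (dist_ge0 x0 z). simpl. unfold height. lra.
Qed.

(* Some point of a geodesic from x to y lies below height k - M. *)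
Lemma not_joined_gap k x y : ~ joined k x y -> height x + height y < d x y + 2 * (INR k - M).
Proof.
  intros Hxy. destruct (chained_or_escapes (fun z => INR k - M <= height z) x y)
    as [|(z & Hz & Hlow)]; [contradiction|].
  pose proof (height_lipschitz z x). pose proof (height_lipschitz z y).
  rewrite dist_sym in H. lra.
Qed.

Lemma sphere_close_joined k x y : height x = INR k -> height y = INR k ->
  d x y <= 2 * M -> joined k x y.
Proof.
  intros Hx Hy Hxy. apply NNPP. intros Hn. apply not_joined_gap in Hn. lra.
Qed.

Definition is_class (k : nat) (A : X -> Prop) : Prop :=
  exists x, INR k <= height x /\ A = joined k x.

Definition vertex : Type := {kA : nat * (X -> Prop) | is_class (fst kA) (snd kA)}.

Definition lvl (u : vertex) : nat := fst (proj1_sig u).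

Definition node k x (H : INR k <= height x) : vertex :=
  exist _ (k, joined k x) (ex_intro _ x (conj H eq_refl)).

Lemma vertex_eq (u v : vertex) : proj1_sig u = proj1_sig v -> u = v.
Proof. apply eq_sig_hprop. intros. apply proof_irrelevance. Qed.

Lemma node_eq k k' x y Hx Hy : k = k' -> joined k x y -> node k x Hx = node k' y Hy.
Proof. intros <- Hxy. apply vertex_eq. simpl. rewrite (joined_ext _ _ _ Hxy). reflexivity. Qed.

Lemma class_sphere_point (u : vertex) :
  exists x, height x = INR (lvl u) /\ snd (proj1_sig u) = joined (lvl u) x.
Proof.
  destruct u as [[k A] Hu]. unfold lvl. simpl in *. destruct Hu as [x [Hx ->]].
  destruct (geodesic_cut x (INR k)) as (x' & Hx' & _ & Hx'x & _); [pose proof (pos_INR k); lra|].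
  exists x'. split; [exact Hx'|]. symmetry. apply joined_ext.
  revert Hx'x. apply chained_weaken. intros z Hz. lra.
Qed.

Definition rep (u : vertex) : X :=
  proj1_sig (constructive_indefinite_description _ (class_sphere_point u)).

Lemma rep_spec u : height (rep u) = INR (lvl u) /\ snd (proj1_sig u) = joined (lvl u) (rep u).
Proof. exact (proj2_sig (constructive_indefinite_description _ (class_sphere_point u))). Qed.

Lemma rep_height u : INR (lvl u) <= height (rep u).
Proof. rewrite (proj1 (rep_spec u)). apply Rle_refl. Qed.

Lemma node_rep u : node (lvl u) (rep u) (rep_height u) = u.
Proof.
  apply vertex_eq. destruct u as [[k A] Hu]. simpl.
  rewrite <- (proj2 (rep_spec (exist _ (k, A) Hu))). reflexivity.
Qed.

Lemma rep_node k x H : joined k x (rep (node k x H)).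
Proof.
  destruct (rep_spec (node k x H)) as [Hh E]. simpl in E. unfold lvl in *. simpl in *.
  rewrite E. apply joined_refl. lra.
Qed.

Lemma rep_pred_height u : INR (pred (lvl u)) <= height (rep u).
Proof. pose proof (rep_height u). pose proof (le_INR _ _ (Nat.le_pred_l (lvl u))). lra. Qed.

Definition par (u : vertex) : vertex := node (pred (lvl u)) (rep u) (rep_pred_height u).

Definition level_adj : vertex -> vertex -> Prop := parent_adj vertex lvl par.

Lemma par_node k x H H' : par (node (S k) x H) = node k x H'.
Proof.
  apply node_eq; [reflexivity|].
  apply joined_sym, joined_mono with (S k); [apply Nat.le_succ_diag_r|apply rep_node].
Qed.

Lemma walk_down x n k Hn Hk : (k <= n)%nat ->
  walk vertex level_adj (node n x Hn) (node k x Hk) (n - k).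
Proof.
  intros Hkn. remember (n - k)%nat as m eqn:Em. revert n Hn Hkn Em.
  induction m as [|m IH]; intros n Hn Hkn Em.
  - rewrite (node_eq n k x x Hn Hk); [constructor|lia|apply joined_refl, Hn].
  - destruct n as [|n]; [lia|].
    assert (Hn' : INR n <= height x) by (rewrite S_INR in Hn; lra).
    apply walkS with (node n x Hn'); [right; split; [reflexivity|apply par_node]|].
    apply IH; lia.
Qed.

Definition root : vertex := node 0 x0 (dist_ge0 x0 x0).

Lemma walk_to_root u : walk vertex level_adj u root (lvl u).
Proof.
  pose proof (walk_down (rep u) (lvl u) 0 (rep_height u) (dist_ge0 x0 (rep u)) (Nat.le_0_l _)) as W.
  rewrite node_rep, Nat.sub_0_r in W.
  rewrite (node_eq 0 0 (rep u) x0 _ (dist_ge0 x0 x0)) in W; [exact W|reflexivity|apply joined_zero].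
Qed.

Lemma level_connected : connected_graph vertex level_adj.
Proof.
  intros u v. exists (lvl u + lvl v)%nat.
  apply walk_app with root; [|apply walk_rev; [apply parent_adj_sym|]]; apply walk_to_root.
Qed.

Lemma level_tree : simplicial_tree vertex level_adj.
Proof.
  split; [exact (inhabits root)|]. split; [apply parent_adj_sym|].
  split; [apply parent_adj_irrefl|]. split; [exact level_connected|apply parent_adj_acyclic].
Qed.

Lemma walk_common_level u v N : walk vertex level_adj u v N -> exists j,
  (j <= lvl u)%nat /\ (j <= lvl v)%nat /\ joined j (rep u) (rep v) /\
  (lvl u + lvl v <= N + 2 * j)%nat.
Proof.
  induction 1 as [u|u w v N Hadj _ (j & Hju & Hjw & Hj & HN)].
  - exists (lvl u). repeat split; try lia. apply joined_refl, rep_height.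
  - assert (Hup : forall c, joined (pred (lvl c)) (rep c) (rep (par c)))
      by (intros; apply rep_node).
    destruct Hadj as [[Hl <-]|[Hl <-]].
    + specialize (Hup w). rewrite Hl in Hup. simpl in Hup.
      destruct (Nat.le_gt_cases j (lvl (par w))) as [Hj'|Hj'].
      * exists j. repeat split; try lia.
        apply joined_trans with (rep w);
          [apply joined_mono with (lvl (par w)); [|apply joined_sym]|]; assumption.
      * exists (lvl (par w)). repeat split; try lia.
        apply joined_trans with (rep w);
          [apply joined_sym|apply joined_mono with j; [lia|]]; assumption.
    + specialize (Hup u). rewrite Hl in Hup. simpl in Hup.
      exists j. repeat split; try lia.
      apply joined_trans with (rep (par u)); [apply joined_mono with (lvl (par u))|]; assumption.
Qed.

Definition level_of (x : X) : nat :=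
  proj1_sig (constructive_indefinite_description _ (nat_floor _ (dist_ge0 x0 x))).

Lemma level_of_spec x : INR (level_of x) <= height x < INR (level_of x) + 1.
Proof. exact (proj2_sig (constructive_indefinite_description _ (nat_floor _ (dist_ge0 x0 x)))). Qed.

Lemma level_of_unique x k : INR k <= height x < INR k + 1 -> level_of x = k.
Proof.
  intros Hk. pose proof (level_of_spec x).
  assert (INR (level_of x) < INR (k + 1)) by (rewrite plus_INR; simpl; lra).
  assert (INR k < INR (level_of x + 1)) by (rewrite plus_INR; simpl; lra).
  apply INR_lt in H0. apply INR_lt in H1. lia.
Qed.

Definition to_vertex (x : X) : vertex := node (level_of x) x (proj1 (level_of_spec x)).

Lemma to_vertex_rep u : to_vertex (rep u) = u.
Proof.
  rewrite <- (node_rep u) at 2. apply node_eq; [|apply joined_refl, level_of_spec].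
  apply level_of_unique. rewrite (proj1 (rep_spec u)). lra.
Qed.

Lemma gdistn_to_vertex_le a b :
  INR (gdistn vertex level_adj (to_vertex a) (to_vertex b)) <= d a b + 2.
Proof.
  set (n := level_of a). set (m := level_of b).
  destruct (nat_greatest_below (fun k => joined k a b) (Nat.min n m) (joined_zero a b))
    as (k & Hk & Hab & Hmax).
  pose proof (level_of_spec a) as Ha. pose proof (level_of_spec b) as Hb. fold n m in Ha, Hb.
  assert (Hkn : (k <= n)%nat) by lia. assert (Hkm : (k <= m)%nat) by lia.
  assert (Hka : INR k <= height a) by (apply le_INR in Hkn; lra).
  assert (Hkb : INR k <= height b) by (apply le_INR in Hkm; lra).
  assert (HW : walk vertex level_adj (to_vertex a) (to_vertex b) ((n - k) + (m - k))).
  { apply walk_app with (node k a Hka); [apply walk_down, Hkn|].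
    rewrite (node_eq k k a b Hka Hkb eq_refl Hab).
    apply walk_rev; [apply parent_adj_sym|apply walk_down, Hkm]. }
  apply (gdistn_le_walk _ _ level_connected) in HW. apply le_INR in HW.
  rewrite plus_INR, !minus_INR in HW by assumption.
  pose proof (height_lipschitz a b). pose proof (height_lipschitz b a). rewrite dist_sym in H0.
  destruct Hmax as [Hkmin|Hnext].
  - destruct (Nat.le_ge_cases n m);
      [replace k with n in HW by lia|replace k with m in HW by lia]; lra.
  - apply not_joined_gap in Hnext. rewrite S_INR in Hnext. lra.
Qed.

(** * Comparison with a quasi-isometric tree *)

Section CoarseTreeMap.
Variables (V : Type) (adj : V -> V -> Prop).
Hypothesis adj_sym : forall u v, adj u v -> adj v u.
Hypothesis conn : connected_graph V adj.
Hypothesis acyc : acyclic V adj.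
Variables (f0 : X -> V) (L C0 : R).
Hypothesis L_ge1 : 1 <= L.
Hypothesis C0_ge0 : 0 <= C0.
Hypothesis f0_upper : forall a b, INR (gdistn V adj (f0 a) (f0 b)) <= L * d a b + C0.
Hypothesis f0_lower : forall a b, d a b <= L * (INR (gdistn V adj (f0 a) (f0 b)) + C0).
Hypothesis M_large : L * C0 <= 2 * M.

Lemma chained_near_separator P a b m : chained P a b -> separates V adj (f0 a) (f0 b) m ->
  exists z, P z /\ INR (gdistn V adj (f0 z) m) <= L + C0.
Proof.
  induction 1 as [x Hx|x y z Hx Hxy Hyz IH]; intros Hsep.
  - exists x. split; [exact Hx|]. destruct (Hsep [] (path_nil _ _ _)) as [<-|[]].
    rewrite gdistn_refl by exact conn. simpl. lra.
  - destruct (classic (separates V adj (f0 y) (f0 z) m)) as [Hsep'|Hsep']; [exact (IH Hsep')|].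
    exists x. split; [exact Hx|].
    apply not_all_ex_not in Hsep' as [l Hl]. apply imply_to_and in Hl as [Hl Hml].
    destruct (gdistn_path V adj conn (f0 x) (f0 y)) as (l0 & Hl0 & El0).
    destruct (path_in_app _ _ _ _ _ _ _ _ Hl0 Hl (Hsep _ (path_app _ _ _ _ _ _ _ Hl0 Hl)))
      as [Hin|Hin]; [|contradiction].
    destruct (path_prefix _ _ _ _ _ _ Hl0 Hin) as (l1 & Hl1 & Hlen).
    pose proof (gdistn_le_path _ _ conn _ _ _ Hl1) as Hm. rewrite El0 in Hlen.
    apply le_INR in Hm, Hlen. pose proof (f0_upper x y). nra.
Qed.

(* A median of the three image vertices is met near all three chains. *)
Lemma chained_triangle_thin P1 P2 P3 a b c :
  chained P1 a b -> chained P2 a c -> chained P3 b c -> exists p q z,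
  P1 p /\ P2 q /\ P3 z /\ d p z <= L * (2 * (L + C0) + C0) /\ d q z <= L * (2 * (L + C0) + C0).
Proof.
  intros Hab Hac Hbc.
  destruct (median V adj adj_sym conn acyc (f0 a) (f0 b) (f0 c)) as (m & Sbc & Sab & Sac).
  destruct (chained_near_separator _ _ _ _ Hab Sab) as (p & Hp & Hpm).
  destruct (chained_near_separator _ _ _ _ Hac Sac) as (q & Hq & Hqm).
  destruct (chained_near_separator _ _ _ _ Hbc Sbc) as (z & Hz & Hzm).
  exists p, q, z. repeat split; try assumption.
  - pose proof (f0_lower p z). pose proof (gdistn_triangle_R _ _ conn (f0 p) m (f0 z)).
    rewrite (gdistn_sym _ _ adj_sym conn m) in H0. nra.
  - pose proof (f0_lower q z). pose proof (gdistn_triangle_R _ _ conn (f0 q) m (f0 z)).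
    rewrite (gdistn_sym _ _ adj_sym conn m) in H0. nra.
Qed.

Definition joined_excess : R := 2 * M + 4 * (L * (2 * (L + C0) + C0)).

Lemma joined_excess_ge0 : 0 <= joined_excess.
Proof.
  unfold joined_excess. assert (0 <= L * (2 * (L + C0) + C0)) by (apply Rmult_le_pos; lra).
  lra.
Qed.

(* Cut the geodesics from x0 to x and y at height k; the thin triangle they form with a
   chain joining the cut points bounds how far apart the cut points can be. *)
Lemma joined_dist_le k x y : joined k x y -> INR k <= height x -> INR k <= height y ->
  d x y <= height x + height y - 2 * INR k + joined_excess.
Proof.
  intros Hxy Hx Hy. pose proof (pos_INR k).
  destruct (geodesic_cut x (INR k)) as (x' & Hx' & Hxx' & Hx'x & Hox'); [lra|].
  destruct (geodesic_cut y (INR k)) as (y' & Hy' & Hyy' & Hy'y & Hoy'); [lra|].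
  assert (Hx'y' : joined k x' y').
  { apply joined_trans with x;
      [revert Hx'x|apply joined_trans with y; [exact Hxy|apply joined_sym; revert Hy'y]];
      apply chained_weaken; intros; lra. }
  destruct (chained_triangle_thin _ _ _ _ _ _ Hox' Hoy' Hx'y')
    as (p & q & z & Hp & Hq & Hz & Hpz & Hqz).
  pose proof (height_lipschitz p z). pose proof (height_lipschitz q z).
  pose proof (dist_triangle x x' y). pose proof (dist_triangle x' p y).
  pose proof (dist_triangle p q y). pose proof (dist_triangle q y' y).
  pose proof (dist_triangle p z q).
  rewrite (dist_sym x x'), (dist_sym x' p) in *. rewrite (dist_sym z q) in *.
  unfold joined_excess. lra.
Qed.

Lemma dist_le_gdistn_to_vertex a b :
  d a b <= INR (gdistn vertex level_adj (to_vertex a) (to_vertex b)) + 2 + joined_excess.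
Proof.
  destruct (gdistn_spec _ _ level_connected (to_vertex a) (to_vertex b)) as [HW _].
  destruct (walk_common_level _ _ _ HW) as (j & Hja & Hjb & Hj & HN).
  change (lvl (to_vertex a)) with (level_of a) in Hja, HN.
  change (lvl (to_vertex b)) with (level_of b) in Hjb, HN.
  assert (Hab : joined j a b).
  { apply joined_trans with (rep (to_vertex a));
      [apply joined_mono with (level_of a); [exact Hja|apply rep_node]|].
    apply joined_trans with (rep (to_vertex b)); [exact Hj|].
    apply joined_sym, joined_mono with (level_of b); [exact Hjb|apply rep_node]. }
  pose proof (level_of_spec a). pose proof (level_of_spec b).
  apply le_INR in Hja, Hjb, HN. rewrite !plus_INR, mult_INR in HN. simpl in HN.
  pose proof (joined_dist_le j a b Hab ltac:(lra) ltac:(lra)). lra.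
Qed.

Definition level_map (x : X) : TPoint vertex level_adj := vertex_point _ _ (to_vertex x).

Lemma level_map_QI : is_QI d tree_dist level_map 1 (joined_excess + 4).
Proof.
  pose proof joined_excess_ge0. split.
  - intros a b. rewrite Rinv_1, !Rmult_1_l.
    pose proof (tree_dist_near vertex level_adj (parent_adj_sym _ _ _) level_connected
      (level_map a) (level_map b)).
    pose proof (gdistn_to_vertex_le a b). pose proof (dist_le_gdistn_to_vertex a b).
    simpl in *. lra.
  - intros y. exists (rep (tp_a y)).
    pose proof (tree_dist_near vertex level_adj (parent_adj_sym _ _ _) level_connected
      y (level_map (rep (tp_a y)))).
    simpl in H0. rewrite to_vertex_rep, gdistn_refl in H0 by exact level_connected.
    simpl in H0. lra.
Qed.

Lemma same_level_same_image u v : lvl u = lvl v -> f0 (rep u) = f0 (rep v) -> u = v.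
Proof.
  intros Hl Hf. rewrite <- (node_rep u), <- (node_rep v). apply node_eq; [exact Hl|].
  apply sphere_close_joined; [apply rep_spec|rewrite Hl; apply rep_spec|].
  pose proof (f0_lower (rep u) (rep v)). rewrite Hf, gdistn_refl in H by exact conn.
  simpl in H. lra.
Qed.

Lemma level_tree_countable : countable_graph V adj -> countable_graph vertex level_adj.
Proof.
  intros [code Hcode]. exists (fun u => Cantor.to_nat (lvl u, code (f0 (rep u)))).
  intros u v Huv. apply (f_equal Cantor.of_nat) in Huv. rewrite !cancel_of_to in Huv.
  injection Huv as Hl Hf. exact (same_level_same_image u v Hl (Hcode _ _ Hf)).
Qed.

(* The children of u are joined at level [lvl u], so their representatives are within
   2 + [joined_excess] of each other and their images lie in a fixed ball of the tree. *)
Lemma level_tree_locally_finite :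
  locally_finite_graph V adj -> locally_finite_graph vertex level_adj.
Proof.
  intros Hlf u.
  destruct (classic (exists w1, lvl w1 = S (lvl u) /\ par w1 = u)) as [(w1 & Hw1l & Hw1p)|Hno].
  2: { exists [par u]. intros w [[Hl Hp]|[Hl Hp]]; [exfalso; eauto|left; exact Hp]. }
  destruct (INR_unbounded (L * (2 + joined_excess) + C0)) as [N HN].
  destruct (locally_finite_ball V adj Hlf (f0 (rep w1)) N) as [B HB].
  set (child t w := lvl w = S (lvl u) /\ par w = u /\ f0 (rep w) = t).
  exists (par u :: map (fun t => epsilon (inhabits u) (child t)) B).
  intros w [[Hl Hp]|[Hl Hp]]; [right|left; exact Hp].
  apply in_map_iff. exists (f0 (rep w)). split.
  - destruct (epsilon_spec (inhabits u) (child (f0 (rep w)))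
      (ex_intro _ w (conj Hl (conj Hp eq_refl)))) as (Hl' & _ & Hf).
    apply same_level_same_image; [congruence|exact Hf].
  - destruct (gdistn_path V adj conn (f0 (rep w1)) (f0 (rep w))) as (l & Hpath & El).
    apply (HB l _ Hpath). rewrite El. apply INR_le.
    assert (Hchild : forall c, par c = u -> joined (lvl u) (rep c) (rep u))
      by (intros c <-; apply rep_node).
    assert (Hjoin : joined (lvl u) (rep w1) (rep w))
      by (apply joined_trans with (rep u); [|apply joined_sym]; apply Hchild; assumption).
    pose proof (proj1 (rep_spec w1)) as H1. pose proof (proj1 (rep_spec w)) as H2.
    rewrite Hw1l, S_INR in H1. rewrite Hl, S_INR in H2.
    pose proof (joined_dist_le _ _ _ Hjoin ltac:(lra) ltac:(lra)).
    pose proof (f0_upper (rep w1) (rep w)). nra.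
Qed.

End CoarseTreeMap.

End LevelTree.

End GeodesicSpace.

Lemma QI_tree_vertex_bounds (X : Type) (d : X -> X -> R) (V : Type) (adj : V -> V -> Prop)
  (f : X -> TPoint V adj) L C :
  (forall u v, adj u v -> adj v u) -> connected_graph V adj -> 1 <= L ->
  is_QI d tree_dist f L C ->
  (forall a b, INR (gdistn V adj (tp_a (f a)) (tp_a (f b))) <= L * d a b + (C + 2)) /\
  (forall a b, d a b <= L * (INR (gdistn V adj (tp_a (f a)) (tp_a (f b))) + (C + 2))).
Proof.
  intros Hsym Hconn HL [Hf _].
  split; intros a b; pose proof (tree_dist_near V adj Hsym Hconn (f a) (f b));
    destruct (Hf a b) as [Hlow Hup]; [lra|].
  apply Rmult_le_reg_l with (/ L); [apply Rinv_0_lt_compat; lra|].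
  rewrite <- Rmult_assoc, Rinv_l, Rmult_1_l by lra. lra.
Qed.

Lemma QI_tree_to_1_QI_tree (X : Type) (d : X -> X -> R) (V : Type) (adj : V -> V -> Prop)
  (f : X -> TPoint V adj) L C :
  is_metric d -> geodesic d -> simplicial_tree V adj -> 1 <= L -> 0 <= C ->
  is_QI d tree_dist f L C ->
  exists (W : Type) (adjW : W -> W -> Prop), simplicial_tree W adjW /\
    (countable_graph V adj -> countable_graph W adjW) /\
    (locally_finite_graph V adj -> locally_finite_graph W adjW) /\
    exists C', 0 <= C' /\ exists g : X -> TPoint W adjW, is_QI d tree_dist g 1 C'.
Proof.
  intros Hm Hg [[v] [Hsym [_ [Hconn Hacyc]]]] HL HC Hf.
  destruct (proj2 Hf (vertex_point V adj v)) as [x0 _].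
  destruct (QI_tree_vertex_bounds X d V adj f L C Hsym Hconn HL Hf) as [Hup Hlow].
  set (f0 x := tp_a (f x)).
  set (M := L * (C + 2)).
  assert (HM : 0 <= M) by (apply Rmult_le_pos; lra).
  assert (HM' : L * (C + 2) <= 2 * M) by (unfold M in *; lra).
  exists (vertex X d x0 M), (level_adj X d Hm Hg x0 M HM).
  split; [|split; [|split]].
  - apply level_tree.
  - apply (level_tree_countable X d Hm Hg x0 M HM V adj Hconn f0 L (C + 2) Hlow HM').
  - apply (level_tree_locally_finite X d Hm Hg x0 M HM V adj Hsym Hconn Hacyc f0 L (C + 2));
      [lra..|exact Hup|exact Hlow|exact HM'].
  - exists (joined_excess M L (C + 2) + 4).
    split; [pose proof (joined_excess_ge0 M HM L (C + 2) HL ltac:(lra)); lra|].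
    exists (level_map X d Hm Hg x0 M HM).
    apply (level_map_QI X d Hm Hg x0 M HM V adj Hsym Hconn Hacyc f0 L (C + 2));
      [lra..|exact Hup|exact Hlow].
Qed.

Theorem corollary4p24 :
  forall (X : Type) (d : X -> X -> R), is_metric d -> geodesic d ->
  ((exists L C, 1 <= L /\ 0 <= C /\ QI_to_tree countable_graph d L C) <->
   (exists C', 0 <= C' /\ QI_to_tree countable_graph d 1 C')) /\
  ((exists L C, 1 <= L /\ 0 <= C /\ QI_to_tree locally_finite_graph d L C) <->
   (exists C', 0 <= C' /\ QI_to_tree locally_finite_graph d 1 C')).
Proof.
  intros X d Hm Hg.
  assert (Hweaken : forall P, (exists C', 0 <= C' /\ QI_to_tree P d 1 C') ->
    exists L C, 1 <= L /\ 0 <= C /\ QI_to_tree P d L C)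
    by (intros P (C' & HC' & HQI); exists 1, C'; repeat split; [lra|exact HC'|exact HQI]).
  split; split; try apply Hweaken.
  all: intros (L & C & HL & HC & V & adj & HT & HP & f & Hf).
  all: destruct (QI_tree_to_1_QI_tree X d V adj f L C Hm Hg HT HL HC Hf)
    as (W & adjW & HW & Hcount & Hlf & C' & HC' & g & Hg').
  all: exists C'; refine (conj HC' _); exists W, adjW.
  all: refine (conj HW (conj _ (ex_intro _ g Hg'))); auto.
Qed.
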